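(* Suppose the pair $\{E,F\}$, $E,F:\mathcal I\to\mathbb R^{m\times m}$ sufficiently smooth, is equivalent to a pair in standard canonical form $\left\{\begin{bmatrix}I_d&0\\0&N\end{bmatrix},\begin{bmatrix}\Omega&0\\0&I_a\end{bmatrix}\right\}$ with $a=m-d$, $\Omega:\mathcal I\to\mathbb R^{d\times d}$ and $N:\mathcal I\to\mathbb R^{a\times a}$ pointwise strictly upper triangular (rank of $N$ not necessarily constant). Then (1) $\operatorname{rank}\mathcal E_{[k]}(t)=\operatorname{rank}\mathcal D_{[k]}(t)=km+d$ for all $t\in\mathcal I$ and all $k\ge a-1$; (2) $\dim(\ker E(t)\cap S_{[k]}(t))=0$ for all $t\in\mathcal I$ and all $k\ge a$.
   Context: Two pairs are equivalent if $\tilde E=LEK$, $\tilde F=LFK+LEK'$ for pointwise nonsingular sufficiently smooth $L,K$. Derivative arrays: $\mathcal E_{[k]}$ is the $(k+1)m\times(k+1)m$ block lower triangular matrix function with $(i,j)$ block ($0\le j\le i\le k$) $\binom{i}{j}E^{(i-j)}+\binom{i}{j+1}F^{(i-j-1)}$ (the $F$-term absent for $j=i$), zero for $j>i$; $\mathcal F_{[k]}=[F;F';\dots;F^{(k)}]$; $\mathcal D_{[0]}=E$, $\mathcal D_{[k]}=\begin{bmatrix}E&0\\\mathcal F_{[k-1]}&\mathcal E_{[k-1]}\end{bmatrix}$ for $k\ge1$; $S_{[k]}(t)=\{z:\mathcal F_{[k]}(t)z\in\operatorname{im}\mathcal E_{[k]}(t)\}$. *)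

From HB Require Import structures.
From mathcomp Require Import all_boot all_order all_algebra.
From mathcomp Require Import all_classical all_reals all_analysis.
Set Implicit Arguments. Unset Strict Implicit. Unset Printing Implicit Defensive.
Import Order.TTheory GRing.Theory Num.Theory.
Local Open Scope ring_scope.
Local Open Scope classical_set_scope.

Section Defs.
Variable R : realType.

Definition mxder {p q : nat} (k : nat) (M : R -> 'M[R]_(p, q)) (t : R)
  : 'M[R]_(p, q) :=
  \matrix_(i, j) derive1n k (fun s => M s i j) t.

(* "sufficiently smooth" := every entry is infinitely differentiable on I *)
Definition smooth_on (I : set R) (f : R -> R) : Prop :=
  forall (n : nat) (t : R), I t -> derivable (derive1n n f) t 1.

Definition smooth_mx {p q : nat} (I : set R) (M : R -> 'M[R]_(p, q)) : Prop :=
  forall i j, smooth_on I (fun s => M s i j).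

Definition pair_equiv {m : nat} (I : set R) (E F Et Ft : R -> 'M[R]_m) : Prop :=
  exists L K : R -> 'M[R]_m,
    [/\ smooth_mx I L, smooth_mx I K,
        (forall t, I t -> L t \in unitmx),
        (forall t, I t -> K t \in unitmx) &
        (forall t, I t ->
           Et t = L t *m E t *m K t /\
           Ft t = L t *m F t *m K t + L t *m E t *m mxder 1 K t)].

Definition strictly_upper {n : nat} (M : 'M[R]_n) : Prop :=
  forall i j : 'I_n, (j <= i)%N -> M i j = 0.

(* n x n block lower triangular matrix with (i,j) block
   C(i,j) E^(i-j) + C(i,j+1) F^(i-j-1)  (F-term absent for j = i),
   zero for j > i.  calE m E F k.+1 t is the derivative array E_[k](t). *)
Definition calE {m : nat} (E F : R -> 'M[R]_m) (n : nat) (t : R) :=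
  \mxblock_(i < n, j < n)
    (if (j <= i)%N then
       ('C(i, j))%:R *: mxder (i - j) E t
       + (if (j < i)%N then ('C(i, j.+1))%:R *: mxder (i - j).-1 F t else 0)
     else (0 : 'M[R]_m)).

Definition calF {m : nat} (F : R -> 'M[R]_m) (n : nat) (t : R) :=
  \mxcol_(i < n) mxder i F t.

Definition Ek {m : nat} (E F : R -> 'M[R]_m) (k : nat) (t : R) := calE E F k.+1 t.
Definition Fk {m : nat} (F : R -> 'M[R]_m) (k : nat) (t : R) := calF F k.+1 t.

(* D_[k] = [E 0; F_[k-1] E_[k-1]] for k >= 1; for k = 0 the lower blocks
   are empty (0 rows / 0 columns), so D_[0] is E itself. *)
Definition Dk {m : nat} (E F : R -> 'M[R]_m) (k : nat) (t : R) :=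
  block_mx (E t) 0 (calF F k t) (calE E F k t).

Definition Sk {m : nat} (E F : R -> 'M[R]_m) (k : nat) (t : R) : set 'cV[R]_m :=
  [set z | exists w, Fk F k t *m z = Ek E F k t *m w].

End Defs.

From mathcomp Require Import all_boot all_order all_algebra.
From mathcomp Require Import all_classical all_reals all_analysis.
From mathcomp Require Import zify.
Set Implicit Arguments. Unset Strict Implicit. Unset Printing Implicit Defensive.
Import Order.TTheory GRing.Theory Num.Theory.
Import numFieldNormedType.Exports.
Local Open Scope ring_scope.

(* At a fixed t a matrix function is represented by its jet (M t, M' t, M'' t, ...);
   the jet of a product is the Leibniz product [lmul] of the jets, and the derivative
   arrays are block matrices built from the jets of E and F.  Substituting x = K y
   into E x' + F x and multiplying by L shows that the derivative arrays of equivalent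
   pairs differ by block lower triangular factors with diagonal blocks L t and K t, so
   ranks and the kernel condition can be read off the canonical pair.  There the
   array splits into the equations y^(i+1) + (Om y)^(i) = 0, whose solutions vanish
   with their initial value, and z^(i) + (N z')^(i) = 0.  As N is strictly upper
   triangular, the operator z |-> (N z')^(.) makes one more trailing coordinate vanish
   at each application; for k >= a - 1 the algebraic equations are therefore solved by
   a terminating Neumann series determined by the last coefficient z^(k) alone, which
   makes the kernels of E_[k] and D_[k] exactly a-dimensional and forces every
   z in ker E t with F_[k] z in im E_[k] to vanish. *)

Section LeibnizProduct.
Variable R : ringType.

Definition lmul {p q r : nat} (a : nat -> 'M[R]_(p, q)) (b : nat -> 'M[R]_(q, r))
    (n : nat) : 'M[R]_(p, r) :=
  \sum_(j < n.+1) 'C(n, j)%:R *: (a j *m b (n - j)%N).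

(* On jets, [dseq] is differentiation, [iseq] the antiderivative vanishing at t and
   [cseq z] the jet of the constant z. *)
Definition dseq {p q : nat} (a : nat -> 'M[R]_(p, q)) (n : nat) := a n.+1.

Definition iseq {p q : nat} (a : nat -> 'M[R]_(p, q)) (n : nat) :=
  if n is n'.+1 then a n' else 0.

Definition cseq {p q : nat} (z : 'M[R]_(p, q)) (n : nat) := if n is 0 then z else 0.

Lemma cseq0 p q n : cseq (0 : 'M[R]_(p, q)) n = 0.
Proof. by case: n. Qed.

Variables p q r : nat.
Implicit Types (a : nat -> 'M[R]_(p, q)) (b : nat -> 'M[R]_(q, r)).

Lemma lmulS a b n : lmul a b n.+1 = lmul (dseq a) b n + lmul a (dseq b) n.
Proof.
rewrite /lmul big_ord_recl /= bin0 subn0.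
under eq_bigr => j _ do rewrite /bump /= add1n binS subSS natrD scalerDl.
rewrite big_split /= addrA addrC; congr (_ + _).
rewrite [in RHS]big_ord_recl /= bin0 subn0 /dseq; congr (_ + _).
rewrite big_ord_recr /= bin_small // scale0r addr0.
by apply: eq_bigr => j _; rewrite /bump /= add1n subnSK.
Qed.

Lemma dseq_lmul a b : dseq (lmul a b) = lmul (dseq a) b \+ lmul a (dseq b).
Proof. by apply/funext => n; rewrite /dseq lmulS. Qed.

Lemma eq_lmul a a' b b' n :
  (forall j, (j <= n)%N -> a j = a' j) -> (forall j, (j <= n)%N -> b j = b' j) ->
  lmul a b n = lmul a' b' n.
Proof. by move=> ha hb; apply: eq_bigr => j _; rewrite ha ?hb ?leq_subr // -ltnS. Qed.

Lemma lmul0 a b : lmul a b 0 = a 0%N *m b 0%N.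
Proof. by rewrite /lmul big_ord1 scale1r. Qed.

Lemma lmulEr a b n :
  lmul a b n = \sum_(j < n.+1) 'C(n, j)%:R *: (a (n - j)%N *m b j).
Proof.
rewrite /lmul (reindex_inj rev_ord_inj); apply: eq_bigr => j _.
by rewrite /= subSS bin_sub ?subKn // -ltnS.
Qed.

Lemma lmulDl a a' b : lmul (a \+ a') b = lmul a b \+ lmul a' b.
Proof.
apply/funext => n /=; rewrite /lmul -big_split; apply: eq_bigr => j _.
by rewrite mulmxDl scalerDr.
Qed.

Lemma lmulDr a b b' : lmul a (b \+ b') = lmul a b \+ lmul a b'.
Proof.
apply/funext => n /=; rewrite /lmul -big_split; apply: eq_bigr => j _.
by rewrite mulmxDr scalerDr.
Qed.

Lemma lmul0r a n : lmul a (fun=> 0 : 'M[R]_(q, r)) n = 0.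
Proof. by rewrite /lmul big1 // => j _; rewrite mulmx0 scaler0. Qed.

Lemma lmul_cseqr a (z : 'M[R]_(q, r)) n : lmul a (cseq z) n = a n *m z.
Proof.
rewrite /lmul big_ord_recr /= subnn binn scale1r big1 ?add0r // => -[j /= ltjn] _.
by rewrite /cseq; case: (n - j)%N (subn_gt0 j n) => [|k]; rewrite ?ltjn ?mulmx0 ?scaler0.
Qed.

Lemma lmul_cseql (z : 'M[R]_(p, q)) b n : lmul (cseq z) b n = z *m b n.
Proof.
rewrite /lmul big_ord_recl bin0 subn0 scale1r big1 ?addr0 // => j _.
by rewrite mul0mx scaler0.
Qed.

End LeibnizProduct.

Lemma lmulA (R : ringType) p q r s (a : nat -> 'M[R]_(p, q)) (b : nat -> 'M[R]_(q, r))
  (c : nat -> 'M[R]_(r, s)) n : lmul (lmul a b) c n = lmul a (lmul b c) n.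
Proof.
elim: n a b c => [|n IH] a b c; first by rewrite !lmul0 mulmxA.
by rewrite lmulS dseq_lmul lmulDl /= !IH [in RHS]lmulS dseq_lmul lmulDr /= addrA.
Qed.

Section DerivativeArrays.
Variable R : ringType.

(* [daeop e f x] is the jet of E x' + F x, and [calE E F n t] is
   [darr (jet E t) (jet F t) n] by conversion. *)
Definition daeop {m c : nat} (e f : nat -> 'M[R]_m) (x : nat -> 'M[R]_(m, c)) :=
  lmul e (dseq x) \+ lmul f x.

Definition darr {m : nat} (e f : nat -> 'M[R]_m) n :=
  \mxblock_(i < n, j < n)
    (if (j <= i)%N then
       'C(i, j)%:R *: e (i - j)%N
       + (if (j < i)%N then 'C(i, j.+1)%:R *: f (i - j)%N.-1 else 0)
     else (0 : 'M[R]_m)).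

(* [ltrans l n] maps the first n coefficients of the jet of u to those of L u, and
   [rtrans k n] those of y' to those of (K y)' when y t = 0. *)
Definition ltrans {m : nat} (l : nat -> 'M[R]_m) n :=
  \mxblock_(i < n, j < n)
    (if (j <= i)%N then 'C(i, j)%:R *: l (i - j)%N else (0 : 'M[R]_m)).

Definition rtrans {m : nat} (k : nat -> 'M[R]_m) n :=
  \mxblock_(i < n, j < n)
    (if (j <= i)%N then 'C(i.+1, j.+1)%:R *: k (i - j)%N else (0 : 'M[R]_m)).

Lemma daeopD m c (e f : nat -> 'M[R]_m) (u v : nat -> 'M[R]_(m, c)) n :
  daeop e f (u \+ v) n = daeop e f u n + daeop e f v n.
Proof.
rewrite /daeop /=; have -> : dseq (u \+ v) = dseq u \+ dseq v by [].
by rewrite !lmulDr /= addrACA.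
Qed.

Lemma eq_daeop m c (e f : nat -> 'M[R]_m) (u v : nat -> 'M[R]_(m, c)) n :
  (forall j, (j <= n.+1)%N -> u j = v j) -> daeop e f u n = daeop e f v n.
Proof.
move=> euv; rewrite /daeop /=; congr (_ + _); apply: eq_lmul => // j ljn.
  exact: euv.
by rewrite euv // ltnW.
Qed.

Lemma daeop_equiv m c (l e f k : nat -> 'M[R]_m) (x : nat -> 'M[R]_(m, c)) n :
  daeop (lmul (lmul l e) k) (lmul (lmul l f) k \+ lmul (lmul l e) (dseq k)) x n
  = lmul l (daeop e f (lmul k x)) n.
Proof.
rewrite /daeop /= lmulDl /= !lmulA dseq_lmul !lmulDr /=.
by rewrite [_ + lmul l (lmul e (lmul (dseq k) x)) n]addrC addrCA addrA.
Qed.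

Lemma sum_ord_widen_if (V : zmodType) n b (X : nat -> V) : (b <= n)%N ->
  \sum_(j < n) (if (j < b)%N then X j else 0) = \sum_(j < b) X j.
Proof. by move=> lbn; rewrite (big_ord_widen n X lbn) [RHS]big_mkcond. Qed.

Lemma darr_mul m c (e f : nat -> 'M[R]_m) n (w : nat -> 'M[R]_(m, c)) :
  darr e f n *m \mxcol_(j < n) w j = \mxcol_(i < n) daeop e f (iseq w) i.
Proof.
rewrite /darr mul_mxblock_mxrow; apply: eq_mxcol => i /=.
transitivity (\sum_(j < n) (if (j < i.+1)%N then
   'C(i, j)%:R *: (e (i - j)%N *m w j) else 0) +
   \sum_(j < n) (if (j < i)%N then
   'C(i, j.+1)%:R *: (f (i - j)%N.-1 *m w j) else 0)).
  rewrite -big_split /=; apply: eq_bigr => j _; rewrite ltnS.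
  case: (leqP j i) => [lji|ltij]; last by rewrite mul0mx (leq_gtF (ltnW ltij)) addr0.
  rewrite mulmxDl -scalemxAl; congr (_ + _).
  by case: (j < i)%N; rewrite ?mul0mx // -scalemxAl.
rewrite (sum_ord_widen_if (fun j => 'C(i, j)%:R *: (e (i - j)%N *m w j))) //.
rewrite (sum_ord_widen_if (fun j => 'C(i, j.+1)%:R *: (f (i - j)%N.-1 *m w j))) 1?ltnW //.
rewrite /daeop /= !lmulEr; congr (_ + _).
rewrite big_ord_recl /= mulmx0 scaler0 add0r.
by apply: eq_bigr => j _; rewrite /bump /= add1n subnS.
Qed.

Lemma mxcol_mul_daeop m c (e f : nat -> 'M[R]_m) n (z : 'M[R]_(m, c)) :
  (\mxcol_(i < n) f i) *m z = \mxcol_(i < n) daeop e f (cseq z) i.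
Proof.
rewrite mxcol_mul; apply: eq_mxcol => i; rewrite /daeop /=.
have -> : dseq (cseq z) = fun=> 0 by apply/funext.
by rewrite lmul0r lmul_cseqr add0r.
Qed.

Lemma ltrans_mul m c (l : nat -> 'M[R]_m) n (u : nat -> 'M[R]_(m, c)) :
  ltrans l n *m \mxcol_(j < n) u j = \mxcol_(i < n) lmul l u i.
Proof.
rewrite /ltrans mul_mxblock_mxrow; apply: eq_mxcol => i.
transitivity (\sum_(j < n) (if (j < i.+1)%N then
   'C(i, j)%:R *: (l (i - j)%N *m u j) else 0)).
  apply: eq_bigr => j _; rewrite ltnS.
  by case: (leqP j i) => _; rewrite ?mul0mx // -scalemxAl.
by rewrite (sum_ord_widen_if (fun j => 'C(i, j)%:R *: (l (i - j)%N *m u j))) // lmulEr.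
Qed.

Lemma rtrans_mul m c (k : nat -> 'M[R]_m) n (w : nat -> 'M[R]_(m, c)) :
  rtrans k n *m \mxcol_(j < n) w j = \mxcol_(i < n) lmul k (iseq w) i.+1.
Proof.
rewrite /rtrans mul_mxblock_mxrow; apply: eq_mxcol => i.
transitivity (\sum_(j < n) (if (j < i.+1)%N then
   'C(i.+1, j.+1)%:R *: (k (i - j)%N *m w j) else 0)).
  apply: eq_bigr => j _; rewrite ltnS.
  by case: (leqP j i) => _; rewrite ?mul0mx // -scalemxAl.
rewrite (sum_ord_widen_if (fun j => 'C(i.+1, j.+1)%:R *: (k (i - j)%N *m w j))) //.
rewrite lmulEr [RHS]big_ord_recl /= mulmx0 scaler0 add0r.
by apply: eq_bigr => j _; rewrite /bump /= add1n subSS.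
Qed.

Lemma mulmx_colP m n (A B : 'M[R]_(m, n)) :
  (forall v : 'cV[R]_n, A *m v = B *m v) -> A = B.
Proof.
move=> eqAB; apply/matrixP => i j.
by have /matrixP/(_ i 0) := eqAB (delta_mx j 0); rewrite -!colE !mxE.
Qed.

(* Junk value 0 past the last block. *)
Definition mxcol_seq {m c n : nat} (V : 'M[R]_(\sum_(i < n) m, c)) (j : nat) :
    'M[R]_(m, c) :=
  if insub j is Some j' then submxcol V j' else 0.

Lemma mxcol_seqE m c n (V : 'M[R]_(\sum_(i < n) m, c)) (j : 'I_n) :
  mxcol_seq V j = submxcol V j.
Proof. by rewrite /mxcol_seq valK. Qed.

Lemma mxcol_seqK m c n (V : 'M[R]_(\sum_(i < n) m, c)) :
  \mxcol_(j < n) mxcol_seq V j = V.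
Proof. by rewrite -{2}(submxcolK V); apply: eq_mxcol => j; rewrite mxcol_seqE. Qed.

Lemma darr_equiv m (l e f k : nat -> 'M[R]_m) n :
  darr (lmul (lmul l e) k) (lmul (lmul l f) k \+ lmul (lmul l e) (dseq k)) n
  = ltrans l n *m darr e f n *m rtrans k n.
Proof.
apply: mulmx_colP => v; rewrite -(mxcol_seqK v) -!mulmxA.
set w := mxcol_seq v.
have iseq_dseq : iseq (dseq (lmul k (iseq w))) = lmul k (iseq w).
  by apply/funext => -[|j] //=; rewrite lmul0 mulmx0.
rewrite darr_mul rtrans_mul (darr_mul _ _ _ (dseq (lmul k (iseq w)))) ltrans_mul.
by apply: eq_mxcol => i; rewrite daeop_equiv iseq_dseq.
Qed.

Lemma mxcol_equiv m (l e f k : nat -> 'M[R]_m) n (z : 'cV[R]_m) :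
  (\mxcol_(i < n) (lmul (lmul l f) k \+ lmul (lmul l e) (dseq k)) i) *m z =
  ltrans l n *m ((\mxcol_(i < n) f i) *m (k 0%N *m z)
                 + darr e f n *m \mxcol_(i < n) (k i.+1 *m z)).
Proof.
have jet_kz : lmul k (cseq z) = cseq (k 0%N *m z) \+ iseq (fun i => k i.+1 *m z).
  by apply/funext => -[|j] /=; rewrite lmul_cseqr ?addr0 ?add0r.
have -> : (\mxcol_(i < n) f i) *m (k 0%N *m z)
          + darr e f n *m \mxcol_(i < n) (k i.+1 *m z)
        = \mxcol_(i < n) daeop e f (lmul k (cseq z)) i.
  rewrite (mxcol_mul_daeop e) (darr_mul _ _ _ (fun i => k i.+1 *m z)) -mxcolD.
  by apply: eq_mxcol => i; rewrite jet_kz daeopD.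
rewrite (mxcol_mul_daeop (lmul (lmul l e) k)) ltrans_mul.
by apply: eq_mxcol => i; rewrite daeop_equiv.
Qed.

Definition darrD {m : nat} (e f : nat -> 'M[R]_m) k :=
  block_mx (e 0%N) 0 (\mxcol_(i < k) f i) (darr e f k).

Definition rtransD {m : nat} (k : nat -> 'M[R]_m) n :=
  block_mx (k 0%N) 0 (\mxcol_(i < n) k i.+1) (rtrans k n).

(* The unknown of D_[k] stacks x t, x' t, ..., x^(k) t. *)
Definition jetcol {m c n : nat} (v : 'M[R]_(m + \sum_(i < n) m, c)) :=
  cseq (usubmx v) \+ iseq (mxcol_seq (dsubmx v)).

Lemma jetcol_col_mx m (x : nat -> 'cV[R]_m) n j : (j <= n)%N ->
  jetcol (col_mx (x 0%N) (\mxcol_(i < n) x i.+1)) j = x j.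
Proof.
case: j => [|j] ljn; rewrite /jetcol /= ?col_mxKu ?col_mxKd ?addr0 ?add0r //.
by rewrite (mxcol_seqE _ (Ordinal ljn)) mxcolK.
Qed.

Lemma darrD_mul m c (e f : nat -> 'M[R]_m) k (v : 'M[R]_(m + \sum_(i < k) m, c)) :
  darrD e f k *m v
  = col_mx (e 0%N *m jetcol v 0%N) (\mxcol_(i < k) daeop e f (jetcol v) i).
Proof.
rewrite -{1}[v]vsubmxK /darrD mul_block_col mul0mx addr0 (mxcol_mul_daeop e).
rewrite -{1}(mxcol_seqK (dsubmx v)) (darr_mul _ _ _ (mxcol_seq (dsubmx v))) -mxcolD.
by rewrite /jetcol /= addr0; congr col_mx; apply: eq_mxcol => i; rewrite daeopD.
Qed.

Lemma rtransD_mul m (k : nat -> 'M[R]_m) n (v : 'cV[R]_(m + \sum_(i < n) m)) :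
  rtransD k n *m v
  = col_mx (lmul k (jetcol v) 0%N) (\mxcol_(i < n) lmul k (jetcol v) i.+1).
Proof.
rewrite -{1}[v]vsubmxK /rtransD mul_block_col mul0mx addr0 lmul0 /jetcol /= addr0.
congr col_mx; rewrite mxcol_mul -{1}(mxcol_seqK (dsubmx v)) rtrans_mul -mxcolD.
by apply: eq_mxcol => i; rewrite lmulDr /= lmul_cseqr.
Qed.

Lemma darrD_equiv m (l e f k : nat -> 'M[R]_m) n :
  darrD (lmul (lmul l e) k) (lmul (lmul l f) k \+ lmul (lmul l e) (dseq k)) n
  = block_mx (l 0%N) 0 0 (ltrans l n) *m darrD e f n *m rtransD k n.
Proof.
apply: mulmx_colP => v; rewrite -!mulmxA rtransD_mul !darrD_mul.
set x := lmul k (jetcol v).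
rewrite jetcol_col_mx // mul_block_col !mul0mx addr0 add0r.
rewrite (_ : \mxcol_(i < n) daeop e f (jetcol _) i = \mxcol_(i < n) daeop e f x i).
  rewrite ltrans_mul; congr col_mx; first by rewrite /x !lmul0 !mulmxA.
  by apply: eq_mxcol => i; rewrite daeop_equiv.
apply: eq_mxcol => i; apply: eq_daeop => j lji.
by rewrite jetcol_col_mx // (leq_trans lji).
Qed.

End DerivativeArrays.

Section Rank.
Variable R : fieldType.

Lemma unitmx_ker0 n (T : 'M[R]_n) :
  (forall v : 'cV[R]_n, T *m v = 0 -> v = 0) -> T \in unitmx.
Proof.
move=> kerT0; rewrite -unitmx_tr -row_free_unit -kermx_eq0; apply/eqP.
apply/row_matrixP => i; rewrite row0.
have : T *m (row i (kermx T^T))^T = 0.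
  by rewrite -[LHS]trmxK trmx_mul trmxK -row_mul mulmx_ker row0 trmx0.
by move/kerT0/(congr1 trmx); rewrite trmxK trmx0.
Qed.

Lemma mxblock_lower_unitmx m n (B : 'I_n -> 'I_n -> 'M[R]_m) (D : 'M[R]_m) :
  D \in unitmx -> (forall i j : 'I_n, (i < j)%N -> B i j = 0) ->
  (forall i, B i i = D) -> \mxblock_(i, j) B i j \in unitmx.
Proof.
move=> uD Bup Bdiag; apply: unitmx_ker0 => v Bv0.
have /eq_mxcolP Bv : \mxcol_i (\sum_j (B i j *m submxcol v j)) = \mxcol_i 0.
  by rewrite mxcol0 -mul_mxblock_mxrow submxcolK.
suff vlt : forall k (i : 'I_n), (i < k)%N -> submxcol v i = 0.
  by rewrite -(submxcolK v) -mxcol0; apply: eq_mxcol => i; apply: (vlt i.+1).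
elim=> [//|k IH] i; rewrite ltnS leq_eqVlt => /orP[/eqP eqik|]; last exact: IH.
have := Bv i; rewrite (bigD1 i) //= big1 ?addr0.
  by rewrite Bdiag => /(congr1 (mulmx (invmx D))); rewrite mulKmx // mulmx0.
move=> j /negbTE nji; case: (ltngtP i j) => [ltij|ltji|eqij].
- by rewrite Bup // mul0mx.
- by rewrite IH ?mulmx0 // -eqik.
- by move: nji; rewrite (val_inj eqij) eqxx.
Qed.

Lemma ltrans_unitmx m (l : nat -> 'M[R]_m) n : l 0%N \in unitmx -> ltrans l n \in unitmx.
Proof.
move=> ul0; apply: (mxblock_lower_unitmx ul0) => [i j ltij|i].
  by rewrite leqNgt ltij.
by rewrite leqnn subnn binn scale1r.
Qed.

Lemma rtrans_unitmx m (k : nat -> 'M[R]_m) n : k 0%N \in unitmx -> rtrans k n \in unitmx.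
Proof.
move=> uk0; apply: (mxblock_lower_unitmx uk0) => [i j ltij|i].
  by rewrite leqNgt ltij.
by rewrite leqnn subnn binn scale1r.
Qed.

Lemma block_lower_unitmx m1 m2 (A : 'M[R]_m1) (B : 'M[R]_(m2, m1)) (D : 'M[R]_m2) :
  A \in unitmx -> D \in unitmx -> block_mx A 0 B D \in unitmx.
Proof. by rewrite !unitmxE det_lblock unitrM => -> ->. Qed.

Lemma mxrank_unit_mulmx r n (L : 'M[R]_r) (A : 'M[R]_(r, n)) (K : 'M[R]_n) :
  L \in unitmx -> K \in unitmx -> \rank (L *m A *m K) = \rank A.
Proof.
move=> uL uK; rewrite mxrankMfree ?row_free_unit //.
by rewrite -mxrank_tr trmx_mul mxrankMfree ?row_free_unit ?unitmx_tr // mxrank_tr.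
Qed.

Lemma mxrank_ker_param r n a (A : 'M[R]_(r, n)) (P : 'M[R]_(a, n)) :
  (forall v : 'cV[R]_n, A *m v = 0 -> P *m v = 0 -> v = 0) ->
  (forall c : 'cV[R]_a, exists2 v, A *m v = 0 & P *m v = c) ->
  (\rank A + a)%N = n.
Proof.
move=> Pinj Psurj; set K := kermx A^T.
have rankK : \rank K = (n - \rank A)%N by rewrite mxrank_ker mxrank_tr.
have trmx_ker (M : 'M[R]_(_, n)) u : (u <= kermx M^T)%MS -> M *m u^T = 0.
  by move/sub_kermxP => uM0; rewrite -[LHS]trmxK trmx_mul trmxK uM0 trmx0.
have capKP : \rank (K :&: kermx P^T)%MS = 0%N.
  apply/eqP; rewrite mxrank_eq0; apply/eqP/row_matrixP => i; rewrite row0.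
  have := row_sub i (K :&: kermx P^T)%MS.
  rewrite sub_capmx => /andP[/trmx_ker uA /trmx_ker uP].
  by have /(congr1 trmx) := Pinj _ uA uP; rewrite trmxK trmx0.
have rankKP : \rank (K *m P^T) = a.
  apply/eqP; rewrite eqn_leq rank_leq_col -{1}(mxrank1 R a) mxrankS //.
  apply/row_subP => i; have [v Av0 Pv] := Psurj (row i 1%:M)^T.
  have -> : row i (1%:M : 'M[R]_a) = v^T *m P^T by rewrite -trmx_mul Pv trmxK.
  by apply: submxMr; apply/sub_kermxP; rewrite -trmx_mul Av0 trmx0.
have := mxrank_mul_ker K P^T; rewrite capKP addn0 rankKP rankK => ->.
by rewrite subnKC ?rank_leq_col.
Qed.

End Rank.

Section VanishingTail.
Variables (R : ringType) (a : nat).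

Definition tail0 (p : nat) (x : 'cV[R]_a) := forall q : 'I_a, (a - p <= q)%N -> x q 0 = 0.

Lemma tail0_nil x : tail0 0 x.
Proof. by move=> q; rewrite subn0 leqNgt ltn_ord. Qed.

Lemma tail0_vec0 p : tail0 p 0.
Proof. by move=> q _; rewrite mxE. Qed.

Lemma tail0N p x : tail0 p x -> tail0 p (- x).
Proof. by move=> x0 q lq; rewrite mxE x0 ?oppr0. Qed.

Lemma tail0_sum p (I : finType) (F : I -> 'cV[R]_a) :
  (forall i, tail0 p (F i)) -> tail0 p (\sum_i F i).
Proof. by move=> F0 q lq; rewrite summxE big1 // => i _; rewrite F0. Qed.

Lemma tail0Z p (c : R) x : tail0 p x -> tail0 p (c *: x).
Proof. by move=> x0 q lq; rewrite mxE x0 ?mulr0. Qed.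

Lemma tail0W p p' x : (p <= p')%N -> tail0 p' x -> tail0 p x.
Proof. by move=> le_p x0 q lq; apply: x0; rewrite (leq_trans _ lq) // leq_sub2l. Qed.

Lemma tail0_full p x : (a <= p)%N -> tail0 p x -> x = 0.
Proof.
move=> lap x0; apply/matrixP => q j; rewrite ord1 mxE x0 //.
by move: lap; rewrite -subn_eq0 => /eqP->.
Qed.

Lemma tail0_mul_upper p (M : 'M[R]_a) x :
  (forall i j : 'I_a, (j <= i)%N -> M i j = 0) -> tail0 p x -> tail0 p.+1 (M *m x).
Proof.
move=> Mup x0 q lq; rewrite mxE big1 // => r _.
case: (leqP r q) => [lrq|ltqr]; first by rewrite Mup // mul0r.
by rewrite x0 ?mulr0 //; move: lq ltqr; lia.
Qed.

Lemma tail0_lmul p (N : nat -> 'M[R]_a) (u : nat -> 'cV[R]_a) n :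
  (forall l (i j : 'I_a), (j <= i)%N -> N l i j = 0) -> (forall j, tail0 p (u j)) ->
  tail0 p.+1 (lmul N u n).
Proof.
move=> Nup u0; apply: tail0_sum => j; apply: tail0Z.
by apply: tail0_mul_upper; [exact: Nup | exact: u0].
Qed.

End VanishingTail.

(* The recursion z_j + X z_j = 0 (j < k) with z_k prescribed: since X raises [tail0],
   [nilstep] is nilpotent and the recursion is solved by a finite Neumann series. *)
Section NilpotentRecursion.
Variables (R : ringType) (a k : nat).
Variable X : (nat -> 'cV[R]_a) -> nat -> 'cV[R]_a.
Hypothesis hak : (a <= k.+1)%N.
Hypothesis Xadd : forall u v, X (u \+ v) = X u \+ X v.
Hypothesis Xtail : forall p u, (forall j, tail0 p (u j)) -> forall j, tail0 p.+1 (X u j).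
Hypothesis Xlocal : forall s u, (forall j, (j < s)%N -> u j = 0) ->
  forall j, (j.+1 < s)%N -> X u j = 0.
Hypothesis Xcausal : forall u v, (forall j, (j <= k)%N -> u j = v j) ->
  forall j, (j < k)%N -> X u j = X v j.

Lemma Xzero : X (fun=> 0) = fun=> 0.
Proof.
have := Xadd (fun=> 0) (fun=> 0); rewrite (_ : _ \+ _ = fun=> 0); last first.
  by apply/funext => j /=; rewrite addr0.
by move=> X00; apply/funext => j; apply: (@addrI _ (X (fun=> 0) j)); rewrite addr0 [in RHS]X00.
Qed.

Lemma Xsum (I : Type) (r : seq I) (F : I -> nat -> 'cV[R]_a) j :
  X (fun i => \sum_(x <- r) F x i) j = \sum_(x <- r) X (F x) j.
Proof.
elim: r => [|x r IH].
  by rewrite big_nil (_ : (fun=> _) = fun=> 0) ?Xzero //; apply/funext => i; rewrite big_nil.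
rewrite big_cons -IH (_ : (fun i => _) = F x \+ fun i => \sum_(y <- r) F y i).
  by rewrite Xadd.
by apply/funext => i; rewrite big_cons.
Qed.

Lemma Xopp u : X (fun i => - u i) = fun i => - X u i.
Proof.
apply/funext => j; apply: (@addrI _ (X u j)); rewrite subrr.
have uNu : u \+ (fun i => - u i) = fun=> 0 by apply/funext => i /=; rewrite subrr.
by have /(congr1 (fun g => g j)) := Xadd u (fun i => - u i); rewrite uNu Xzero /= => <-.
Qed.

Definition nilstep (v : nat -> 'cV[R]_a) j := - (if (j < k)%N then X v j else 0).

Lemma nilstep_sum (I : Type) (r : seq I) (F : I -> nat -> 'cV[R]_a) j :
  nilstep (fun i => \sum_(x <- r) F x i) j = \sum_(x <- r) nilstep (F x) j.
Proof.
rewrite /nilstep Xsum; case: (j < k)%N; first by rewrite sumrN.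
by rewrite oppr0 big1 // => x _; rewrite oppr0.
Qed.

Lemma tail0_iter_nilstep p v j : tail0 p (iter p nilstep v j).
Proof.
elim: p j => [|p IH] j /=; first exact: tail0_nil.
by apply: tail0N; case: (j < k)%N; [exact: Xtail | exact: tail0_vec0].
Qed.

Lemma nilrec_uniq z : (forall j, (j < k)%N -> z j + X z j = 0) -> z k = 0 ->
  forall j, (j <= k)%N -> z j = 0.
Proof.
move=> zrec zk0; pose T j := if (j <= k)%N then z j else 0.
have T_fix : nilstep T = T.
  apply/funext => j; rewrite /T /nilstep; case: ltngtP => [ltjk|ltkj|->].
  - rewrite -(@Xcausal z) // => [|i -> //].
    by apply/eqP; rewrite eq_sym -addr_eq0 zrec.
  - by rewrite oppr0.
  - by rewrite oppr0 zk0.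
have T_iter n : iter n nilstep T = T by elim: n => //= n ->.
move=> j ljk; have := @tail0_iter_nilstep a T j; rewrite T_iter => /tail0_full.
by rewrite /T ljk => ->.
Qed.

Definition seq_at (c : 'cV[R]_a) j := if j == k then c else 0.

Lemma iter_nilstep_seq_at c i j : (j + i < k)%N -> iter i nilstep (seq_at c) j = 0.
Proof.
elim: i j => [|i IH] j lt_jik /=.
  by rewrite /seq_at addn0 in lt_jik *; rewrite (ltn_eqF lt_jik).
rewrite /nilstep; case: (j < k)%N; last by rewrite oppr0.
by rewrite (@Xlocal (k - i)) ?oppr0 // => [l lt_l|]; [apply: IH|]; lia.
Qed.

Variable N : 'M[R]_a.
Hypothesis Nup : forall i j : 'I_a, (j <= i)%N -> N i j = 0.

Lemma nilrec_exists c : exists z, [/\ forall j, (j < k)%N -> z j + X z j = 0,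
  z k = c & N *m z 0%N = 0].
Proof.
pose z j := \sum_(i < a) iter i nilstep (seq_at c) j.
have z_step j : z j - nilstep z j = seq_at c j.
  have := telescope_sumr (fun i => iter i nilstep (seq_at c) j) (leq0n a).
  rewrite (tail0_full (leqnn a) (@tail0_iter_nilstep a _ j)) sub0r big_mkord sumrB.
  by move=> telesc; rewrite /z nilstep_sum -[RHS]opprK -telesc opprB.
exists z; split.
- by move=> j ltjk; have := z_step j; rewrite /nilstep ltjk /seq_at (ltn_eqF ltjk) opprK.
- by have := z_step k; rewrite /nilstep ltnn oppr0 subr0 /seq_at eqxx.
- rewrite /z mulmx_sumr big1 // => i _.
  have [ltik|leki] := ltnP i k; first by rewrite iter_nilstep_seq_at ?mulmx0.
  apply: (tail0_full hak); apply: tail0_mul_upper => //.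
  exact: tail0W leki (@tail0_iter_nilstep i (seq_at c) 0%N).
Qed.

Lemma nilrec_ker z : (forall j, (j < k)%N -> z j + X z j = 0) -> N *m z 0%N = 0.
Proof.
move=> zrec; have [u [urec uk Nu0]] := nilrec_exists (z k).
suff /eqP : z 0%N - u 0%N = 0 by rewrite subr_eq0 => /eqP ->.
apply: (nilrec_uniq (z := z \- u)) => //=; last by rewrite uk subrr.
move=> j ltjk; rewrite (_ : z \- u = z \+ (fun i => - u i)) // Xadd Xopp /=.
by rewrite addrACA zrec // -opprD urec // oppr0 addr0.
Qed.

End NilpotentRecursion.

Section CanonicalForm.
Variables (R : fieldType) (d a : nat).
Variable Om : nat -> 'M[R]_d.
Variable N : nat -> 'M[R]_a.
Hypothesis Nup : forall l (i j : 'I_a), (j <= i)%N -> N l i j = 0.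

Definition canE n : 'M[R]_(d + a) := block_mx (cseq 1%:M n) 0 0 (N n).
Definition canF n : 'M[R]_(d + a) := block_mx (Om n) 0 0 (cseq 1%:M n).

Lemma lmul_block c (P : nat -> 'M[R]_d) (Q : nat -> 'M[R]_a) (x : nat -> 'M[R]_(d + a, c)) n :
  lmul (fun j => block_mx (P j) 0 0 (Q j)) x n
  = col_mx (lmul P (fun j => usubmx (x j)) n) (lmul Q (fun j => dsubmx (x j)) n).
Proof.
rewrite -[LHS]vsubmxK /lmul !linear_sum /=.
by congr col_mx; apply: eq_bigr => j _; rewrite -[x (n - j)%N]vsubmxK mul_block_col
  !mul0mx addr0 add0r scale_col_mx ?col_mxKu ?col_mxKd.
Qed.

Lemma daeop_canon c (x : nat -> 'M[R]_(d + a, c)) n :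
  daeop canE canF x n
  = col_mx (usubmx (x n.+1) + lmul Om (fun j => usubmx (x j)) n)
           (lmul N (fun j => dsubmx (x j.+1)) n + dsubmx (x n)).
Proof. by rewrite /daeop /= /canE /canF !lmul_block !lmul_cseql !mul1mx add_col_mx. Qed.

Lemma canE0_mul c (x : 'M[R]_(d + a, c)) :
  canE 0%N *m x = col_mx (usubmx x) (N 0%N *m dsubmx x).
Proof. by rewrite -{1}[x]vsubmxK /canE mul_block_col mul1mx !mul0mx addr0 add0r. Qed.

Lemma ode_jet0 (y : nat -> 'cV[R]_d) K : y 0%N = 0 ->
  (forall i, (i < K)%N -> y i.+1 + lmul Om y i = 0) -> forall i, (i <= K)%N -> y i = 0.
Proof.
move=> y0 yrec; elim/ltn_ind => -[//|i] IH leiK.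
have := yrec i leiK; rewrite (@eq_lmul _ _ _ _ Om Om _ (fun=> 0)) ?lmul0r ?addr0 //.
by move=> j leji; apply: IH; lia.
Qed.

Lemma ode_jet0_iseq (y : nat -> 'cV[R]_d) K :
  (forall i, (i <= K)%N -> y i + lmul Om (iseq y) i = 0) -> forall i, (i <= K)%N -> y i = 0.
Proof.
move=> yrec; elim/ltn_ind => i IH leiK.
have := yrec i leiK; rewrite (@eq_lmul _ _ _ _ Om Om _ (fun=> 0)) ?lmul0r ?addr0 //.
by move=> -[|j] //= leji; apply: IH; lia.
Qed.

Definition nilE (u : nat -> 'cV[R]_a) := dseq (lmul N u).
Definition nilD (u : nat -> 'cV[R]_a) := lmul N (dseq u).

Lemma nilE_add u v : nilE (u \+ v) = nilE u \+ nilE v.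
Proof. by rewrite /nilE lmulDr. Qed.

Lemma nilE_tail p u : (forall j, tail0 p (u j)) -> forall j, tail0 p.+1 (nilE u j).
Proof. by move=> u0 j; apply: tail0_lmul. Qed.

Lemma nilE_local s u : (forall j, (j < s)%N -> u j = 0) ->
  forall j, (j.+1 < s)%N -> nilE u j = 0.
Proof.
move=> u0 j ltjs; rewrite /nilE /dseq (@eq_lmul _ _ _ _ N N _ (fun=> 0)) ?lmul0r //.
by move=> l lelj; apply: u0; lia.
Qed.

Lemma nilE_causal k u v : (forall j, (j <= k)%N -> u j = v j) ->
  forall j, (j < k)%N -> nilE u j = nilE v j.
Proof. by move=> euv j ltjk; apply: eq_lmul => // l lelj; apply: euv; lia. Qed.

Lemma nilD_add u v : nilD (u \+ v) = nilD u \+ nilD v.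
Proof. by rewrite /nilD -lmulDr. Qed.

Lemma nilD_tail p u : (forall j, tail0 p (u j)) -> forall j, tail0 p.+1 (nilD u j).
Proof. by move=> u0 j; apply: tail0_lmul => // l; apply: u0. Qed.

Lemma nilD_local s u : (forall j, (j < s)%N -> u j = 0) ->
  forall j, (j.+1 < s)%N -> nilD u j = 0.
Proof.
move=> u0 j ltjs; rewrite /nilD (@eq_lmul _ _ _ _ N N _ (fun=> 0)) ?lmul0r //.
by move=> l lelj; apply: u0; lia.
Qed.

Lemma nilD_causal k u v : (forall j, (j <= k)%N -> u j = v j) ->
  forall j, (j < k)%N -> nilD u j = nilD v j.
Proof. by move=> euv j ltjk; apply: eq_lmul => // l lelj; apply: euv; lia. Qed.


Lemma usubmx_iseq c (w : nat -> 'M[R]_(d + a, c)) :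
  (fun j => usubmx (iseq w j)) = iseq (fun j => usubmx (w j)).
Proof. by apply/funext => -[|j] //=; rewrite linear0. Qed.

Lemma darr_canon_mul0 k (w : nat -> 'cV[R]_(d + a)) :
  darr canE canF k.+1 *m \mxcol_(j < k.+1) w j = 0 <->
  [/\ forall i, (i <= k)%N -> usubmx (w i) + lmul Om (iseq (fun j => usubmx (w j))) i = 0,
      N 0%N *m dsubmx (w 0%N) = 0 &
      forall j, (j < k)%N -> dsubmx (w j) + nilE (fun j => dsubmx (w j)) j = 0].
Proof.
rewrite darr_mul -mxcol0; split => [/eq_mxcolP w0 | [up0 low0 lowS]].
  have daeop0 i : (i <= k)%N -> daeop canE canF (iseq w) i = 0.
    by rewrite -ltnS => ltik; apply: (w0 (Ordinal ltik)).
  split => [i leik | | j ltjk].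
  - by have /eqP := daeop0 i leik; rewrite daeop_canon col_mx_eq0 usubmx_iseq => /andP[/eqP].
  - have /eqP := daeop0 0%N isT; rewrite daeop_canon col_mx_eq0 => /andP[_].
    by rewrite lmul0 /= linear0 addr0 => /eqP.
  - have /eqP := daeop0 j.+1 ltjk; rewrite daeop_canon col_mx_eq0 => /andP[_ /eqP].
    by rewrite addrC.
apply: eq_mxcol => -[i ltik]; rewrite daeop_canon /= usubmx_iseq up0 //.
case: i ltik => [|i] ltik /=; first by rewrite lmul0 linear0 addr0 low0 col_mx0.
by rewrite addrC lowS ?col_mx0.
Qed.

Lemma rank_darr_canon k : (a <= k.+1)%N ->
  (\rank (darr canE canF k.+1) + a)%N = \sum_(i < k.+1) (d + a).
Proof.
move=> hak; pose P := dsubmx (submxcol (1%:M : 'M[R]_(\sum_(i < k.+1) (d + a))) ord_max).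
have Pw (w : nat -> 'cV[R]_(d + a)) : P *m \mxcol_(j < k.+1) w j = dsubmx (w k).
  by rewrite /P mul_dsub_mx submxcol_mul mul1mx mxcolK.
apply: (mxrank_ker_param (P := P)) => [v | c].
  rewrite -(mxcol_seqK v) Pw => /darr_canon_mul0[up0 _ lowS] wk0.
  have y0 := ode_jet0_iseq up0.
  have z0 := nilrec_uniq nilE_tail (nilE_causal (k := k)) lowS wk0.
  rewrite -mxcol0; apply: eq_mxcol => j; have lejk : (j <= k)%N by rewrite -ltnS.
  by rewrite -[mxcol_seq v j]vsubmxK y0 // z0 // col_mx0.
have [z [zrec zk Nz0]] := nilrec_exists hak nilE_add nilE_tail nilE_local (Nup 0) c.
pose w j := col_mx (0 : 'cV[R]_d) (z j).
have wu : (fun j => usubmx (w j)) = fun=> 0 by apply/funext => j; rewrite col_mxKu.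
have wd : (fun j => dsubmx (w j)) = z by apply/funext => j; rewrite col_mxKd.
exists (\mxcol_(j < k.+1) w j); last by rewrite Pw col_mxKd.
apply/darr_canon_mul0; rewrite wu wd; split => [i _ | | j ltjk].
- by rewrite col_mxKu (_ : iseq _ = fun=> 0) ?lmul0r ?addr0 //; apply/funext => -[].
- by rewrite col_mxKd.
- by rewrite col_mxKd zrec.
Qed.

Lemma daeop_canon_eq0 k (x : nat -> 'cV[R]_(d + a)) :
  (canE 0%N *m x 0%N = 0 /\ forall i, (i < k)%N -> daeop canE canF x i = 0) <->
  [/\ usubmx (x 0%N) = 0,
      forall i, (i < k)%N -> usubmx (x i.+1) + lmul Om (fun j => usubmx (x j)) i = 0,
      N 0%N *m dsubmx (x 0%N) = 0 &
      forall j, (j < k)%N -> dsubmx (x j) + nilD (fun j => dsubmx (x j)) j = 0].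
Proof.
rewrite canE0_mul; split => [[/eqP x0 xrec] | [u0 urec Nd0 drec]].
  move: x0; rewrite col_mx_eq0 => /andP[/eqP u0 /eqP Nd0].
  split=> // i ltik; have /eqP := xrec i ltik.
    by rewrite daeop_canon col_mx_eq0 => /andP[/eqP].
  by rewrite daeop_canon col_mx_eq0 => /andP[_ /eqP dx]; rewrite addrC; exact: dx.
split; first by rewrite u0 Nd0 col_mx0.
by move=> i ltik; rewrite daeop_canon urec // addrC drec // col_mx0.
Qed.

Definition jetsel k : 'M[R]_(d + a, (d + a) + \sum_(j < k) (d + a)) :=
  row_mx (cseq 1%:M k) (\mxrow_(j < k) (if j.+1 == k then 1%:M else 0)).

Lemma jetsel_mul k (v : 'cV[R]_((d + a) + \sum_(j < k) (d + a))) :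
  jetsel k *m v = jetcol v k.
Proof.
rewrite -{1}[v]vsubmxK /jetsel mul_row_col -{1}(submxcolK (dsubmx v)) mul_mxrow_mxcol.
case: k v => [|k] v; first by rewrite [X in _ + X]big_ord0 mul1mx addr0 /jetcol /= addr0.
rewrite mul0mx add0r (bigD1 ord_max) //= eqxx mul1mx [X in _ + X]big1 ?addr0.
  by rewrite /jetcol /= add0r -mxcol_seqE.
by move=> j /negbTE; rewrite -val_eqE /= eqSS => ->; rewrite mul0mx.
Qed.

Lemma jetcolK k (v : 'cV[R]_((d + a) + \sum_(j < k) (d + a))) :
  col_mx (jetcol v 0%N) (\mxcol_(j < k) jetcol v j.+1) = v.
Proof.
by rewrite /jetcol /= addr0; under eq_mxcol do rewrite add0r; rewrite mxcol_seqK vsubmxK.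
Qed.

Lemma darrD_canon_mul0 k (v : 'cV[R]_((d + a) + \sum_(j < k) (d + a))) :
  darrD canE canF k *m v = 0 <->
  (canE 0%N *m jetcol v 0%N = 0 /\ forall i, (i < k)%N -> daeop canE canF (jetcol v) i = 0).
Proof.
rewrite darrD_mul -col_mx0 -mxcol0; split => [/eq_col_mx[-> /eq_mxcolP x0] | [-> x0]].
  by split=> // i ltik; apply: (x0 (Ordinal ltik)).
by congr col_mx; apply: eq_mxcol => i; apply: x0.
Qed.

Lemma rank_darrD_canon k : (a <= k.+1)%N ->
  (\rank (darrD canE canF k) + a)%N = ((d + a) + \sum_(j < k) (d + a))%N.
Proof.
move=> hak; apply: (mxrank_ker_param (P := dsubmx (jetsel k))) => [v | c].
  rewrite mul_dsub_mx jetsel_mul => /darrD_canon_mul0/daeop_canon_eq0[u0 urec _ drec] dk0.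
  have y0 := ode_jet0 u0 urec.
  have z0 := nilrec_uniq nilD_tail (nilD_causal (k := k)) drec dk0.
  have x0 j : (j <= k)%N -> jetcol v j = 0.
    by move=> lejk; rewrite -[jetcol v j]vsubmxK y0 // z0 // col_mx0.
  rewrite -(jetcolK v) -col_mx0 x0 //; congr col_mx.
  by rewrite -mxcol0; apply: eq_mxcol => j; apply: x0.
have [z [zrec zk Nz0]] := nilrec_exists hak nilD_add nilD_tail nilD_local (Nup 0) c.
pose x j := col_mx (0 : 'cV[R]_d) (z j).
have xu : (fun j => usubmx (x j)) = fun=> 0 by apply/funext => j; rewrite col_mxKu.
have xd : (fun j => dsubmx (x j)) = z by apply/funext => j; rewrite col_mxKd.
exists (col_mx (x 0%N) (\mxcol_(j < k) x j.+1)); last first.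
  by rewrite mul_dsub_mx jetsel_mul jetcol_col_mx // col_mxKd.
have [x0 xrec] : canE 0%N *m x 0%N = 0 /\ forall i, (i < k)%N -> daeop canE canF x i = 0.
  apply/daeop_canon_eq0; rewrite xu xd.
  by split=> [|i _||j ltjk]; rewrite ?col_mxKu ?col_mxKd ?lmul0r ?addr0 ?zrec.
apply/darrD_canon_mul0; rewrite jetcol_col_mx //; split=> // i ltik.
rewrite -(xrec i ltik); apply: eq_daeop => j leji.
by rewrite jetcol_col_mx // (leq_trans leji).
Qed.

Lemma darr_canon_S k (z : 'cV[R]_(d + a)) (W : 'cV[R]_(\sum_(i < k.+1) (d + a))) :
  (a <= k.+1)%N -> canE 0%N *m z = 0 ->
  (\mxcol_(i < k.+1) canF i) *m z = darr canE canF k.+1 *m W -> z = 0.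
Proof.
move=> hak; rewrite canE0_mul => /eqP; rewrite col_mx_eq0 => /andP[/eqP u0 _].
rewrite (mxcol_mul_daeop canE) -{1}(mxcol_seqK W) darr_mul => /eq_mxcolP zW.
set w := mxcol_seq W in zW.
have low i : (i <= k)%N ->
    dsubmx (cseq z i) = lmul N (fun j => dsubmx (w j)) i + dsubmx (iseq w i).
  rewrite -ltnS => ltik; have := zW (Ordinal ltik); rewrite !daeop_canon => /eq_col_mx[_].
  rewrite (_ : (fun j => _) = fun=> 0) ?lmul0r ?add0r //.
  by apply/funext => j; rewrite linear0.
have Nw0 : N 0%N *m dsubmx (w 0%N) = 0.
  apply: (nilrec_ker hak nilE_add nilE_tail nilE_local (nilE_causal (k := k)) (Nup 0)
           (z := fun j => dsubmx (w j))).
  by move=> j ltjk; have := low j.+1 ltjk; rewrite /= linear0 addrC => <-.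
have := low 0%N isT; rewrite /= lmul0 Nw0 linear0 addr0 => d0.
by rewrite -[z]vsubmxK u0 d0 col_mx0.
Qed.

End CanonicalForm.
Section SmoothMatrixFunctions.
Variable R : realType.
Variable I : set R.
Hypothesis I_open : forall s, I s -> \forall y \near s, I y.

Definition jet {p q : nat} (M : R -> 'M[R]_(p, q)) (s : R) (n : nat) := mxder n M s.

Lemma jet0 p q (M : R -> 'M[R]_(p, q)) s : jet M s 0 = M s.
Proof. by apply/matrixP => i j; rewrite mxE. Qed.

Lemma derive1n_eq_on (f g : R -> R) : (forall s, I s -> f s = g s) ->
  forall n s, I s -> derive1n n f s = derive1n n g s.
Proof.
move=> efg; elim=> [|n IH] s Is; first exact: efg.
rewrite !derive1nS !derive1E; apply: near_eq_derive.
by apply: filterS (I_open Is) => y Iy; exact: IH.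
Qed.

Lemma mxder_eq_on p q (M M' : R -> 'M[R]_(p, q)) : (forall s, I s -> M s = M' s) ->
  forall n s, I s -> mxder n M s = mxder n M' s.
Proof.
move=> eM n s Is; apply/matrixP => i j; rewrite !mxE.
by apply: derive1n_eq_on => // x Ix; rewrite eM.
Qed.

Lemma smooth_is_derive (f : R -> R) n s : smooth_on I f -> I s ->
  is_derive s 1 (derive1n n f) (derive1n n.+1 f s).
Proof. by move=> sf Is; have := derivableP (sf n s Is); rewrite -derive1E. Qed.

Lemma is_derive_sum_fun n (h : 'I_n -> R -> R) (dh : 'I_n -> R) (x : R) :
  (forall i, is_derive x 1 (h i) (dh i)) ->
  is_derive x 1 (fun y => \sum_(i < n) h i y) (\sum_(i < n) dh i).
Proof.
move=> dhi; have := @is_derive_sum _ _ _ n h x 1 dh dhi.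
rewrite (_ : \sum_(i < n) h i = fun y => \sum_(i < n) h i y) //.
by apply/funext => y; rewrite fct_sumE.
Qed.

Section Product.
Variables (p q r : nat) (A : R -> 'M[R]_(p, q)) (B : R -> 'M[R]_(q, r)).
Hypotheses (sA : smooth_mx I A) (sB : smooth_mx I B).

Lemma is_derive_lmul_jet n s i j : I s ->
  is_derive s 1 (fun x => lmul (jet A x) (jet B x) n i j) (lmul (jet A s) (jet B s) n.+1 i j).
Proof.
move=> Is; have lmul_entry (a : nat -> 'M[R]_(p, q)) (b : nat -> 'M[R]_(q, r)) m :
    lmul a b m i j = \sum_(l < m.+1) 'C(m, l)%:R * \sum_(k < q) (a l i k * b (m - l)%N k j).
  by rewrite /lmul summxE; apply: eq_bigr => l _; rewrite !mxE.
have -> : (fun x => lmul (jet A x) (jet B x) n i j) = fun x =>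
    \sum_(l < n.+1) 'C(n, l)%:R * \sum_(k < q)
      (derive1n l (fun y => A y i k) x * derive1n (n - l) (fun y => B y k j) x).
  apply/funext => x; rewrite lmul_entry; apply: eq_bigr => l _.
  by congr (_ * _); apply: eq_bigr => k _; rewrite !mxE.
rewrite lmulS mxE !lmul_entry -big_split /=.
apply: is_derive_sum_fun => l; rewrite -mulrDr; apply: is_deriveZ.
rewrite -big_split /=; apply: is_derive_sum_fun => k; rewrite /dseq /jet !mxE addrC.
have := is_deriveM (smooth_is_derive l (@sA i k) Is) (smooth_is_derive (n - l) (@sB k j) Is).
by move=> dAB; apply: (is_derive_eq dAB); rewrite /GRing.scale /= [X in _ + X]mulrC.
Qed.

Lemma derive1n_mulmx n s i j : I s ->
  derive1n n (fun x => (A x *m B x) i j) s = lmul (jet A s) (jet B s) n i j.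
Proof.
elim: n s => [|n IH] s Is; first by rewrite lmul0 !jet0.
rewrite derive1nS derive1E.
rewrite (@near_eq_derive _ _ _ _ (fun x => lmul (jet A x) (jet B x) n i j)).
  by have dlmul := is_derive_lmul_jet n i j Is; rewrite derive_val.
by apply: filterS (I_open Is) => y Iy; exact: IH.
Qed.

Lemma mxder_mulmx n s : I s -> mxder n (fun x => A x *m B x) s = lmul (jet A s) (jet B s) n.
Proof. by move=> Is; apply/matrixP => i j; rewrite mxE derive1n_mulmx. Qed.

Lemma smooth_mulmx : smooth_mx I (fun x => A x *m B x).
Proof.
move=> i j n s Is; apply: (near_eq_derivable (f := fun x => lmul (jet A x) (jet B x) n i j)).
  by apply: filterS (I_open Is) => y Iy; rewrite derive1n_mulmx.
by case: (is_derive_lmul_jet n i j Is).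
Qed.

End Product.

Section Sum.
Variables (p q : nat) (A B : R -> 'M[R]_(p, q)).
Hypotheses (sA : smooth_mx I A) (sB : smooth_mx I B).

Lemma derive1n_addmx n s i j : I s ->
  derive1n n (fun x => (A x + B x) i j) s =
  derive1n n (fun x => A x i j) s + derive1n n (fun x => B x i j) s.
Proof.
elim: n s => [|n IH] s Is; first by rewrite /= mxE.
rewrite !derive1nS !derive1E.
rewrite (@near_eq_derive _ _ _ _
  (derive1n n (fun x => A x i j) + derive1n n (fun x => B x i j))).
  by rewrite deriveD //; [exact: sA | exact: sB].
by apply: filterS (I_open Is) => y Iy; rewrite IH.
Qed.

Lemma mxder_addmx n s : I s -> mxder n (fun x => A x + B x) s = mxder n A s + mxder n B s.
Proof. by move=> Is; apply/matrixP => i j; rewrite !mxE derive1n_addmx. Qed.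

End Sum.

Lemma mxder1S p q (K : R -> 'M[R]_(p, q)) n s :
  mxder n (fun x => mxder 1 K x) s = mxder n.+1 K s.
Proof.
apply/matrixP => i j; rewrite !mxE.
by rewrite (_ : (fun x => _) = derive1n 1 (fun x => K x i j)) -?derive1Sn //;
   apply/funext => x; rewrite mxE.
Qed.

Lemma smooth_mxder1 p q (K : R -> 'M[R]_(p, q)) :
  smooth_mx I K -> smooth_mx I (fun x => mxder 1 K x).
Proof.
move=> sK i j n s Is; rewrite (_ : (fun x => _) = derive1n 1 (fun x => K x i j)).
  by rewrite -derive1Sn; apply: sK.
by apply/funext => x; rewrite mxE.
Qed.

End SmoothMatrixFunctions.

Section ConstantAndBlockFunctions.
Variable R : realType.

Lemma derive1nS_cst n (c : R) : derive1n n.+1 (fun=> c) = fun=> 0.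
Proof.
elim: n => [|n IH]; first by apply/funext => s; rewrite derive1n1 derive1_cst.
by rewrite derive1nS IH; apply/funext => s; rewrite derive1_cst.
Qed.

Lemma jet_cst p q (C : 'M[R]_(p, q)) s : jet (fun=> C) s = cseq C.
Proof.
apply/funext => -[|n]; apply/matrixP => i j; rewrite mxE //=.
by rewrite -derive1nS derive1nS_cst mxE.
Qed.

Lemma jet_block d a (A : R -> 'M[R]_d) (B : R -> 'M[R]_(d, a)) (C : R -> 'M[R]_(a, d))
    (D : R -> 'M[R]_a) s :
  jet (fun x => block_mx (A x) (B x) (C x) (D x)) s
  = fun n => block_mx (jet A s n) (jet B s n) (jet C s n) (jet D s n).
Proof.
apply/funext => n; apply/matrixP => i j; rewrite [LHS]mxE.
rewrite (_ : (fun x => _) = fun x => match fintype.split i, fintype.split j with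
  | inl i1, inl j1 => A x i1 j1 | inl i1, inr j2 => B x i1 j2
  | inr i2, inl j1 => C x i2 j1 | inr i2, inr j2 => D x i2 j2 end).
  rewrite mxE; case: (fintype.split i) => i'; rewrite mxE;
  by case: (fintype.split j) => j'; rewrite !mxE.
apply/funext => x; rewrite mxE; case: (fintype.split i) => i'; rewrite mxE;
by case: (fintype.split j).
Qed.

End ConstantAndBlockFunctions.

Section EquivalentToCanonical.
Variable R : realType.
Variable I : set R.
Hypothesis I_open : forall s, I s -> \forall y \near s, I y.
Variables (d a : nat) (E F L K : R -> 'M[R]_(d + a)) (Om : R -> 'M[R]_d) (N : R -> 'M[R]_a).
Hypotheses (sE : smooth_mx I E) (sF : smooth_mx I F) (sL : smooth_mx I L) (sK : smooth_mx I K).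
Hypothesis N_upper : forall s, I s -> strictly_upper (N s).
Hypothesis equivEF : forall s, I s ->
  block_mx 1%:M 0 0 (N s) = L s *m E s *m K s /\
  block_mx (Om s) 0 0 1%:M = L s *m F s *m K s + L s *m E s *m mxder 1 K s.
Hypotheses (uL : forall s, I s -> L s \in unitmx) (uK : forall s, I s -> K s \in unitmx).
Variable t : R.
Hypothesis It : I t.

Lemma jet_mulmx p q r (A : R -> 'M[R]_(p, q)) (B : R -> 'M[R]_(q, r)) :
  smooth_mx I A -> smooth_mx I B ->
  jet (fun x => A x *m B x) t = lmul (jet A t) (jet B t).
Proof. by move=> sA sB; apply/funext => n; rewrite /jet (mxder_mulmx I_open sA sB). Qed.

Lemma jet_canE : lmul (lmul (jet L t) (jet E t)) (jet K t) = canE d (jet N t).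
Proof.
have sLE := smooth_mulmx I_open sL sE.
rewrite -(jet_mulmx sL sE) -(jet_mulmx sLE sK).
apply/funext => n.
rewrite /jet (mxder_eq_on I_open (M' := fun x => block_mx 1%:M 0 0 (N x))) //.
  by change (jet (fun x => block_mx 1%:M 0 0 (N x)) t n = canE d (jet N t) n);
     rewrite jet_block !jet_cst !cseq0.
by move=> s Is; rewrite (equivEF Is).1.
Qed.

Lemma jet_canF : lmul (lmul (jet L t) (jet F t)) (jet K t)
                 \+ lmul (lmul (jet L t) (jet E t)) (dseq (jet K t)) = canF a (jet Om t).
Proof.
have sK' := smooth_mxder1 sK.
have [sLE sLF] := (smooth_mulmx I_open sL sE, smooth_mulmx I_open sL sF).
have jK' : jet (fun x => mxder 1 K x) t = dseq (jet K t).
  by apply/funext => n; rewrite /jet mxder1S.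
rewrite -(jet_mulmx sL sE) -(jet_mulmx sL sF) -jK' -(jet_mulmx sLE sK') -(jet_mulmx sLF sK).
apply/funext => n /=; rewrite /jet -(mxder_addmx I_open (smooth_mulmx I_open sLF sK)
                                      (smooth_mulmx I_open sLE sK')) //.
rewrite (mxder_eq_on I_open (M' := fun x => block_mx (Om x) 0 0 1%:M)) //.
  by change (jet (fun x => block_mx (Om x) 0 0 1%:M) t n = canF a (jet Om t) n);
     rewrite jet_block !jet_cst !cseq0.
by move=> s Is; rewrite (equivEF Is).2.
Qed.

Lemma jet_N_upper l (i j : 'I_a) : (j <= i)%N -> jet N t l i j = 0.
Proof.
move=> leji; have N0 s : I s -> N s i j = 0 by move=> Is; exact: N_upper.
rewrite /jet mxE (derive1n_eq_on I_open N0 l It).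
by case: l => [|l] //; rewrite derive1nS_cst.
Qed.

Lemma unit_jet0 (M : R -> 'M[R]_(d + a)) : (forall s, I s -> M s \in unitmx) ->
  jet M t 0%N \in unitmx.
Proof. by move=> uM; rewrite jet0 uM. Qed.

Lemma rank_Ek k : (a <= k.+1)%N -> \rank (Ek E F k t) = (k * (d + a) + d)%N.
Proof.
move=> hak; change (Ek E F k t) with (darr (jet E t) (jet F t) k.+1).
rewrite -(mxrank_unit_mulmx _ (ltrans_unitmx k.+1 (unit_jet0 uL))
                                          (rtrans_unitmx k.+1 (unit_jet0 uK))).
rewrite -darr_equiv jet_canE jet_canF.
have := rank_darr_canon (jet Om t) jet_N_upper hak.
move: (\rank _) => r; rewrite sum_nat_const card_ord; lia.
Qed.

Lemma rank_Dk k : (a <= k.+1)%N -> \rank (Dk E F k t) = (k * (d + a) + d)%N.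
Proof.
move=> hak; rewrite /Dk -(jet0 E) -/(darrD (jet E t) (jet F t) k).
rewrite -(mxrank_unit_mulmx _
  (block_lower_unitmx 0 (unit_jet0 uL) (ltrans_unitmx k (unit_jet0 uL)))
  (block_lower_unitmx (\mxcol_(i < k) jet K t i.+1) (unit_jet0 uK)
                      (rtrans_unitmx k (unit_jet0 uK)))).
rewrite -darrD_equiv jet_canE jet_canF.
have := rank_darrD_canon (jet Om t) jet_N_upper hak.
move: (\rank _) => r; rewrite sum_nat_const card_ord; lia.
Qed.

Lemma Sk_ker_E k (z : 'cV[R]_(d + a)) : (a <= k.+1)%N ->
  E t *m z = 0 -> Sk E F k t z -> z = 0.
Proof.
move=> hak Ez0 [w Fz_Ew]; have uKt := uK It.
(* Differentiating K zt produces the extra terms K^(i+1) zt, collected in C. *)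
pose zt := invmx (K t) *m z; pose C := \mxcol_(i < k.+1) (jet K t i.+1 *m zt).
have Kzt : K t *m zt = z by rewrite mulKVmx.
have canE_zt : canE d (jet N t) 0%N *m zt = 0.
  by rewrite -jet_canE !lmul0 !jet0 -[LHS]mulmxA Kzt -mulmxA Ez0 mulmx0.
suff /(congr1 (mulmx (K t))) : zt = 0 by rewrite Kzt mulmx0.
apply: (darr_canon_S (Om := jet Om t) jet_N_upper hak canE_zt
         (W := invmx (rtrans (jet K t) k.+1) *m (w + C))).
rewrite -jet_canF -jet_canE mxcol_equiv darr_equiv jet0 Kzt.
rewrite (_ : \mxcol_(i < k.+1) jet F t i *m z = darr (jet E t) (jet F t) k.+1 *m w) //.
have uKk := rtrans_unitmx k.+1 (unit_jet0 uK).
by rewrite -mulmxDr [RHS]mulmxA mulmxK // mulmxA.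
Qed.

End EquivalentToCanonical.

Local Open Scope classical_set_scope.

Theorem theoremt (R : realType) (t0 tf : R) (d a : nat)
  (E F : R -> 'M[R]_(d + a)) (Om : R -> 'M[R]_d) (N : R -> 'M[R]_a) :
  t0 < tf ->
  smooth_mx `]t0, tf[ E -> smooth_mx `]t0, tf[ F ->
  (forall t, `]t0, tf[ t -> strictly_upper (N t)) ->
  pair_equiv `]t0, tf[ E F
    (fun t => block_mx 1%:M 0 0 (N t)) (fun t => block_mx (Om t) 0 0 1%:M) ->
  (forall t, `]t0, tf[ t -> forall k : nat, (a.-1 <= k)%N ->
      \rank (Ek E F k t) = (k * (d + a) + d)%N /\
      \rank (Dk E F k t) = (k * (d + a) + d)%N) /\
  (forall t, `]t0, tf[ t -> forall k : nat, (a <= k)%N ->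
      forall z : 'cV[R]_(d + a), E t *m z = 0 -> Sk E F k t z -> z = 0).
Proof.
move=> _ sE sF N_upper [L [K [sL sK uL uK equivEF]]].
have I_open s : `]t0, tf[ s -> \forall y \near s, `]t0, tf[ y.
  by move=> ?; exact: near_in_itvoo.
split=> t It k lek; have hak : (a <= k.+1)%N by lia.
  split; [exact: (rank_Ek I_open sE sF sL sK N_upper equivEF uL uK It hak)
         |exact: (rank_Dk I_open sE sF sL sK N_upper equivEF uL uK It hak)].
by move=> z; exact: (Sk_ker_E I_open sE sF sL sK N_upper equivEF uK It hak).
Qed.
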